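(* Consider the common support-set model described in the context with $J=T$, let $h\ge1$, $m\ge0$, and let $\mathsf p_1,\dots,\mathsf p_h,\mathsf q_1,\dots,\mathsf q_{m+1}$ be distinct sensors. Then (whenever the conditioning events have positive probability) $$\Pr\Big(i\in\mathcal J\ \Big|\ i\in\bigcap_{l=1}^{h}\hat{\mathcal T}_{\mathsf p_l},\ i\in\bigcap_{l=1}^{m}\hat{\mathcal T}_{\mathsf q_l}^{\complement}\Big)\ \ge\ \Pr\Big(i\in\mathcal J\ \Big|\ i\in\bigcap_{l=1}^{h-1}\hat{\mathcal T}_{\mathsf p_l},\ i\in\bigcap_{l=1}^{m+1}\hat{\mathcal T}_{\mathsf q_l}^{\complement}\Big).$$
   Context: Let $N>T\ge1$ be integers and $\Omega=\{1,\dots,N\}$; complements are taken in $\Omega$. A finite set $\mathcal L$ of sensors is given. Common support-set model: every sensor $\mathsf p\in\mathcal L$ has the same fixed true support set $\mathcal T_{\mathsf p}=\mathcal J\subseteq\Omega$ with $|\mathcal J|=J=T$. Each sensor has a random estimated support set $\hat{\mathcal T}_{\mathsf p}\subseteq\Omega$. A random index $i$ is uniformly distributed on $\Omega$ and independent of all estimates. System model: there is $\epsilon$ with $0\le\epsilon\le (N-T)/N$, common to all sensors, such that for every sensor $\mathsf p$ and every $j\in\Omega$, $\Pr(j\in\hat{\mathcal T}_{\mathsf p})=1-\epsilon$ if $j\in\mathcal T_{\mathsf p}$ and $\Pr(j\in\hat{\mathcal T}_{\mathsf p})=\frac{T}{N-T}\epsilon$ if $j\notin\mathcal T_{\mathsf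 p}$ (so $\Pr(i\in\hat{\mathcal T}_{\mathsf p})=T/N$, detection probability $1-\epsilon$, miss probability $\epsilon$, false-alarm probability $\frac{T}{N-T}\epsilon$). For each fixed $j\in\Omega$, the events $\{j\in\hat{\mathcal T}_{\mathsf p}\}$, $\mathsf p\in\mathcal L$, are mutually independent. *)

From HB Require Import structures.
From mathcomp Require Import all_boot all_order all_algebra.
From mathcomp Require Import all_classical all_reals all_analysis.
Set Implicit Arguments. Unset Strict Implicit. Unset Printing Implicit Defensive.
Import Order.TTheory GRing.Theory Num.Theory.
Local Open Scope classical_set_scope.
Local Open Scope ring_scope.

Definition pr d (Omega : measurableType d) (R : realType)
  (P : probability Omega R) (A : set Omega) : R := fine (P A).

Definition cond_pr d (Omega : measurableType d) (R : realType)
  (P : probability Omega R) (A B : set Omega) : R :=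
  pr P (A `&` B) / pr P B.

(* Given i = j, the sensors detect j independently, each with probability
   c j = a := 1 - eps if j \in J and c j = b := T eps / (N - T) otherwise, and i is
   uniform and independent of the estimates.  Hence, given k detections and
   m misses, the probability that i lies in J is the Bayes ratio
     T a^k (1-a)^m / (T a^k (1-a)^m + (N - T) b^k (1-b)^m).
   Trading a miss for a detection multiplies the odds by a(1-b) / (b(1-a)),
   which is at least 1 because eps <= (N - T)/N gives b <= a.  The independence
   hypothesis only speaks of joint detections; it extends to patterns of
   detections and misses by induction on the number of misses. *)

From HB Require Import structures.
From mathcomp Require Import all_boot all_order all_algebra.
From mathcomp Require Import all_classical all_reals all_analysis.
From mathcomp Require Import ring lra.
Set Implicit Arguments.
Unset Strict Implicit.
Unset Printing Implicit Defensive.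
Import Order.TTheory GRing.Theory Num.Theory.
Local Open Scope classical_set_scope.
Local Open Scope ring_scope.

Section Posterior.
Variable R : realFieldType.

Definition likelihood (a : R) (k m : nat) := a ^+ k * (1 - a) ^+ m.

Definition posterior (t s a b : R) (k m : nat) :=
  t * likelihood a k m / (t * likelihood a k m + s * likelihood b k m).

Lemma posterior_miss_le_hit (t s a b : R) (k m : nat) :
  0 <= t -> 0 <= s -> 0 <= b -> b <= a -> a <= 1 ->
  0 < t * likelihood a k.+1 m + s * likelihood b k.+1 m ->
  0 < t * likelihood a k m.+1 + s * likelihood b k m.+1 ->
  posterior t s a b k m.+1 <= posterior t s a b k.+1 m.
Proof.
move=> t_ge0 s_ge0 b_ge0 b_le_a a_le1 hit_gt0 miss_gt0.
rewrite /posterior ler_pdivrMr // mulrAC ler_pdivlMr // -subr_ge0.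
have -> : t * likelihood a k.+1 m * (t * likelihood a k m.+1 + s * likelihood b k m.+1)
    - t * likelihood a k m.+1 * (t * likelihood a k.+1 m + s * likelihood b k.+1 m)
    = t * s * (likelihood a k m * likelihood b k m) * (a - b).
  by rewrite /likelihood !exprS; ring.
have lik_ge0 x : 0 <= x -> x <= 1 -> 0 <= likelihood x k m.
  by move=> x_ge0 x_le1; rewrite /likelihood mulr_ge0 ?exprn_ge0 ?subr_ge0.
have lik_a := lik_ge0 a (le_trans b_ge0 b_le_a) a_le1.
have lik_b := lik_ge0 b b_ge0 (le_trans b_le_a a_le1).
by rewrite mulr_ge0 ?subr_ge0 // mulr_ge0 // mulr_ge0.
Qed.

Lemma sumr_in_if (I : finType) (J : {set I}) (a b : R) (F : R -> R) :
  \sum_(j in J) F (if j \in J then a else b) = #|J|%:R * F a.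
Proof. by rewrite (eq_bigr (fun=> F a)) => [|j ->] //; rewrite sumr_const mulr_natl. Qed.

Lemma sumr_two_valued (I : finType) (J : {set I}) (a b : R) (F : R -> R) :
  \sum_j F (if j \in J then a else b) = #|J|%:R * F a + #|~: J|%:R * F b.
Proof.
rewrite (bigID [in J]) /= sumr_in_if; congr (_ + _).
rewrite (eq_bigl [in ~: J]) => [|j]; last by rewrite inE.
rewrite (eq_bigr (fun=> F b)) => [|j]; last by rewrite inE => /negbTE ->.
by rewrite sumr_const mulr_natl.
Qed.

Lemma false_alarm_le_detection (N T : nat) (eps : R) :
  (T < N)%N -> eps <= (N - T)%:R / N%:R -> T%:R / (N - T)%:R * eps <= 1 - eps.
Proof.
move=> T_lt_N; have NT_gt0 : 0 < (N - T)%:R :> R by rewrite ltr0n subn_gt0.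
have N_gt0 : 0 < N%:R :> R by rewrite ltr0n (leq_ltn_trans _ T_lt_N).
have N_split : N%:R = (N - T)%:R + T%:R :> R by rewrite -natrD subnK // ltnW.
rewrite ler_pdivlMr // mulrAC ler_pdivrMr // N_split => eps_le; nra.
Qed.

End Posterior.

Lemma card_ord_ltn n : #|[set l : 'I_n.+1 | (l < n)%N]%SET| = n.
Proof.
have -> : [set l : 'I_n.+1 | (l < n)%N]%SET = [set~ ord_max]%SET.
  by apply/setP => l; rewrite !inE -val_eqE /= ltn_neqAle -ltnS ltn_ord andbT.
by rewrite cardsC1 card_ord.
Qed.

Lemma fun_of_finfun (aT : finType) (rT : Type) (f : aT -> rT) :
  fun_of_fin [ffun x => f x] = f.
Proof. by apply/funext => x; rewrite ffunE. Qed.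

Section Probability.
Context d (Omega : measurableType d) (R : realType) (P : probability Omega R).

Lemma pr_setDI (A B : set Omega) : measurable A -> measurable B ->
  pr P A = pr P (A `\` B) + pr P (A `&` B).
Proof.
move=> mA mB; rewrite /pr (measureDI P mA mB) fineD //; apply: fin_num_measure.
  exact: measurableD.
exact: measurableI.
Qed.

Lemma pr_total n (X : Omega -> 'I_n) (A : set Omega) : measurable A ->
  (forall i, measurable [set w | X w = i]) ->
  pr P A = \sum_(i < n) pr P (A `&` [set w | X w = i]).
Proof.
move=> mA mX.
have {1}-> : A = \big[setU/set0]_(i < n) (A `&` [set w | X w = i]).
  rewrite -bigcup_pred; apply/seteqP; split => [w Aw|w [i _ []//]].
  by exists (X w) => //=; rewrite in_setE.
rewrite /pr measure_bigsetU_ord.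
- by rewrite -sum_fine // => i _; apply: fin_num_measure; exact: measurableI.
- by move=> i; exact: measurableI.
- by move=> i j _ _ [w [[_ <-] [_ <-]]].
Qed.

Lemma pr_uniform_index_total n (U : Type) (X : Omega -> 'I_n) (Y : Omega -> U) :
  (forall Q : pred ('I_n * U), measurable [set w | Q (X w, Y w)]) ->
  (forall i, pr P [set w | X w = i] = n%:R^-1) ->
  (forall i (Q : pred U), pr P [set w | X w = i /\ Q (Y w)] =
     pr P [set w | X w = i] * pr P [set w | Q (Y w)]) ->
  forall Q : 'I_n -> pred U,
  pr P [set w | Q (X w) (Y w)] = n%:R^-1 * \sum_(i < n) pr P [set w | Q i (Y w)].
Proof.
move=> mXY unif indep Q.
have mXi i : measurable [set w | X w = i].
  have := mXY (fun z => z.1 == i); congr measurable.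
  by apply/seteqP; split => w /= /eqP.
rewrite (pr_total (X := X)) //; last exact: (mXY (fun z => Q z.1 z.2)).
rewrite mulr_sumr; apply: eq_bigr => i _; rewrite -(unif i) -indep.
by congr pr; apply/seteqP; split => w /= [] => [QXY <- | -> QY].
Qed.

Section IndependentEvents.
Variables (L : finType) (e : L -> Omega -> bool).
Hypothesis measurable_events :
  forall Q : pred {ffun L -> bool}, measurable [set w | Q [ffun p => e p w]].
Hypothesis pr_all_events : forall S : {set L},
  pr P [set w | [forall p in S, e p w]] = \prod_(p in S) pr P [set w | e p w].

Definition pattern_event (S S' : {set L}) : set Omega :=
  [set w | [forall p in S, e p w] && [forall p in S', ~~ e p w]].

Lemma measurable_pattern_event (S S' : {set L}) : measurable (pattern_event S S').
Proof.
have := measurable_events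
  (fun f : {ffun L -> bool} => [forall p in S, f p] && [forall p in S', ~~ f p]).
by congr measurable; apply/seteqP; split => w /=; rewrite fun_of_finfun.
Qed.

Lemma measurable_event p : measurable [set w | e p w].
Proof.
have := measurable_events (fun f => f p).
by congr measurable; apply/seteqP; split => w /=; rewrite ffunE.
Qed.

Lemma pr_pattern_event (S S' : {set L}) : [disjoint S & S']%B ->
  pr P (pattern_event S S') =
  \prod_(p in S) pr P [set w | e p w] * \prod_(p in S') (1 - pr P [set w | e p w]).
Proof.
move: S; have [n] := ubnP #|S'|; elim: n S' => // n IH S' ltS'n S disjS.
have [->|[q qS']] := set_0Vmem S'.
  rewrite big_set0 mulr1 -pr_all_events; congr pr.
  apply/seteqP; split => w; rewrite /pattern_event /=; first by case/andP.
  by move=> ->; apply/forall_inP => p; rewrite inE.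
have qS : q \notin S by rewrite (disjointFl disjS).
have disjS'' : [disjoint S & S' :\ q]%B.
  by apply: disjointWr disjS; exact: subD1set.
have disjqS : [disjoint q |: S & S' :\ q]%B.
  (* qualified: classical_sets shadows both names *)
  rewrite finset.disjoints_subset; apply/fintype.subsetP => p.
  rewrite !inE => /predU1P[->|pS]; first by rewrite eqxx.
  by rewrite (disjointFr disjS pS) andbF.
have ltS''n : (#|S' :\ q| < n)%N.
  by rewrite -ltnS (leq_trans _ ltS'n) // ltnS (cardsD1 q S') qS'.
have hit_q : pattern_event S (S' :\ q) `&` [set w | e q w] =
    pattern_event (q |: S) (S' :\ q).
  apply/seteqP; split => w; rewrite /pattern_event /= -!big_andE big_setU1 //=.
    by case=> /andP[-> ->] ->.
  by case/andP=> /andP[-> ->] ->.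
have miss_q : pattern_event S (S' :\ q) `\` [set w | e q w] = pattern_event S S'.
  apply/seteqP; split => w; rewrite /pattern_event /= -!big_andE (big_setD1 q qS') /=.
    by case=> /andP[-> ->] /negP ->.
  by case/andP=> -> /andP[/negP ? ->].
have := pr_setDI (measurable_pattern_event S (S' :\ q)) (measurable_event q).
rewrite hit_q miss_q (IH _ ltS''n _ disjS'') (IH _ ltS''n _ disjqS).
rewrite big_setU1 //= (big_setD1 q qS') /=.
by move=> /eqP; rewrite -subr_eq => /eqP <-; ring.
Qed.

End IndependentEvents.

End Probability.

Section SensorModel.
Context d (Omega : measurableType d) (R : realType) (P : probability Omega R).
Variables (N : nat) (L : finType) (est : L -> Omega -> {set 'I_N}) (idx : Omega -> 'I_N).
Variable c : 'I_N -> R.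
Hypothesis measurable_idx_est : forall Q : pred ('I_N * {ffun L -> {set 'I_N}}),
  measurable [set w | Q (idx w, [ffun p => est p w])].
Hypothesis pr_detect : forall p j, pr P [set w | j \in est p w] = c j.
Hypothesis sensors_indep : forall j (S : {set L}),
  pr P [set w | forall p, p \in S -> j \in est p w] =
  \prod_(p in S) pr P [set w | j \in est p w].
Hypothesis idx_uniform : forall j, pr P [set w | idx w = j] = N%:R^-1.
Hypothesis idx_indep : forall j (Q : pred {ffun L -> {set 'I_N}}),
  pr P [set w | idx w = j /\ Q [ffun p => est p w]] =
  pr P [set w | idx w = j] * pr P [set w | Q [ffun p => est p w]].

Definition support_pattern (G : pred 'I_N) (S S' : {set L}) : set Omega :=
  [set w | [&& G (idx w), [forall p in S, idx w \in est p w]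
                & [forall p in S', idx w \notin est p w]]].

Lemma pr_pattern_at j (S S' : {set L}) : [disjoint S & S']%B ->
  pr P [set w | [forall p in S, j \in est p w] && [forall p in S', j \notin est p w]] =
  likelihood (c j) #|S| #|S'|.
Proof.
move=> disjS; have := pr_pattern_event (e := fun p w => j \in est p w) _ _ disjS.
rewrite /pattern_event /= => ->; last first.
- move=> S0; rewrite -sensors_indep; congr pr.
  by apply/seteqP; split => w /= /forall_inP.
- move=> Q; have := measurable_idx_est (fun z => Q [ffun p => j \in z.2 p]).
  by congr measurable; apply/seteqP; split => w /=; rewrite fun_of_finfun.
under eq_bigr do rewrite pr_detect; under [in X in _ * X]eq_bigr do rewrite pr_detect.
by rewrite !prodr_const.
Qed.

Lemma pr_support_pattern (G : pred 'I_N) (S S' : {set L}) : [disjoint S & S']%B ->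
  pr P (support_pattern G S S') =
  N%:R^-1 * \sum_(j | G j) likelihood (c j) #|S| #|S'|.
Proof.
move=> disjS.
pose Q j (f : {ffun L -> {set 'I_N}}) :=
  [&& G j, [forall p in S, j \in f p] & [forall p in S', j \notin f p]].
transitivity (pr P [set w | Q (idx w) [ffun p => est p w]]).
  by congr pr; apply/seteqP; split => w /=; rewrite /Q fun_of_finfun.
rewrite (pr_uniform_index_total measurable_idx_est idx_uniform idx_indep); congr (_ * _).
rewrite [RHS]big_mkcond /=; apply: eq_bigr => j _; rewrite /Q; case: (G j) => /=.
  by rewrite -pr_pattern_at //; congr pr; apply/seteqP; split => w /=; rewrite fun_of_finfun.
by rewrite /pr (_ : [set _ | false] = set0) ?measure0 //; apply/seteqP; split.
Qed.

Lemma cond_pr_support_pattern (J : {set 'I_N}) (S S' : {set L}) :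
  (0 < N)%N -> [disjoint S & S']%B ->
  cond_pr P [set w | idx w \in J] (support_pattern predT S S') =
  (\sum_(j in J) likelihood (c j) #|S| #|S'|) /
  (\sum_j likelihood (c j) #|S| #|S'|).
Proof.
move=> N_gt0 disjS; rewrite /cond_pr.
have -> : [set w | idx w \in J] `&` support_pattern predT S S' =
    support_pattern [in J] S S' by apply/seteqP; split => w /= /andP[].
rewrite !pr_support_pattern // invfM mulrACA divff ?mul1r //.
by rewrite invr_eq0 pnatr_eq0 -lt0n.
Qed.

Lemma support_pattern_imset (I I' : finType) (f : I -> L) (g : I' -> L)
    (D : {set I}) (D' : {set I'}) :
  support_pattern predT (f @: D) (g @: D') =
  [set w | (forall l, l \in D -> idx w \in est (f l) w) /\
           (forall l, l \in D' -> idx w \notin est (g l) w)].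
Proof.
apply/seteqP; split => w /=.
  by case/and3P => _ /forall_inP fD /forall_inP gD; split => l lD;
    [apply: fD | apply: gD]; exact: imset_f.
by case=> fD gD; apply/and3P; split => //; apply/forall_inP => _ /imsetP[l lD ->];
  [exact: fD | exact: gD].
Qed.

End SensorModel.

Theorem proposition3
  (R : realType) (d : measure_display) (Omega : measurableType d)
  (P : probability Omega R)
  (N T : nat) (L : finType)
  (J : {set 'I_N})
  (est : L -> Omega -> {set 'I_N})   (* estimated support sets *)
  (idx : Omega -> 'I_N)              (* the random index i *)
  (eps : R) :
  (1 <= T)%N -> (T < N)%N -> #|J| = T ->
  0 <= eps -> eps <= (N - T)%:R / N%:R ->
  (* all events determined by (i, estimates) are measurable *)
  (forall Q : pred ('I_N * {ffun L -> {set 'I_N}}),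
      measurable [set w | Q (idx w, [ffun p => est p w])]) ->
  (* detection / false-alarm probabilities *)
  (forall (p : L) (j : 'I_N),
      pr P [set w | j \in est p w] =
        (if j \in J then 1 - eps else (T%:R / (N - T)%:R) * eps)) ->
  (* for fixed j, the events {j in est p}, p in L, are mutually independent *)
  (forall (j : 'I_N) (S : {set L}),
      pr P [set w | forall p, p \in S -> j \in est p w] =
        \prod_(p in S) pr P [set w | j \in est p w]) ->
  (* i uniform on Omega *)
  (forall j : 'I_N, pr P [set w | idx w = j] = N%:R^-1) ->
  (* i independent of all estimates *)
  (forall (j : 'I_N) (Q : pred {ffun L -> {set 'I_N}}),
      pr P [set w | idx w = j /\ Q [ffun p => est p w]] =
        pr P [set w | idx w = j] * pr P [set w | Q [ffun p => est p w]]) ->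
  forall (h m : nat) (ps : 'I_h -> L) (qs : 'I_m.+1 -> L),
  (1 <= h)%N ->
  injective ps -> injective qs -> (forall a b, ps a <> qs b) ->
  let A  := [set w | idx w \in J] in
  let B1 := [set w | (forall l : 'I_h, idx w \in est (ps l) w) /\
                     (forall l : 'I_m.+1, (l < m)%N -> idx w \notin est (qs l) w)] in
  let B2 := [set w | (forall l : 'I_h, (l < h.-1)%N -> idx w \in est (ps l) w) /\
                     (forall l : 'I_m.+1, idx w \notin est (qs l) w)] in
  0 < pr P B1 -> 0 < pr P B2 ->
  cond_pr P A B1 >= cond_pr P A B2.
Proof.
move=> T_gt0 T_lt_N cardJ eps_ge0 eps_le measurable_obs pr_detect sensors_indep
  idx_uniform idx_indep [//|k] m ps qs _ ps_inj qs_inj ps_qs A B1 B2 B1_gt0 B2_gt0.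
pose c j := if j \in J then 1 - eps else T%:R / (N - T)%:R * eps.
have N_gt0 : (0 < N)%N := leq_ltn_trans (leq0n T) T_lt_N.
have disj (D : {set 'I_k.+1}) (D' : {set 'I_m.+1}) : [disjoint ps @: D & qs @: D']%B.
  rewrite -setI_eq0; apply/eqP/setP => p; rewrite !inE.
  by apply/andP => -[/imsetP[l _ ->] /imsetP[l' _ /ps_qs]].
have eB1 : B1 = support_pattern est idx predT (ps @: [set: 'I_k.+1]%SET)
    (qs @: [set l : 'I_m.+1 | (l < m)%N]%SET).
  rewrite support_pattern_imset; apply/seteqP; split => w /= [hit miss].
    by split => l; rewrite inE //; exact: miss.
  by split => [l|l lm]; [apply: hit; rewrite inE | apply: miss; rewrite inE].
have eB2 : B2 = support_pattern est idx predT (ps @: [set l : 'I_k.+1 | (l < k)%N]%SET)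
    (qs @: [set: 'I_m.+1]%SET).
  rewrite support_pattern_imset; apply/seteqP; split => w /= [hit miss].
    by split => l; rewrite inE //; exact: hit.
  by split => [l lk|l]; [apply: hit; rewrite inE | apply: miss; rewrite inE].
have pr_model := pr_support_pattern measurable_obs (c := c) pr_detect sensors_indep
  idx_uniform idx_indep.
have cond_model := cond_pr_support_pattern measurable_obs (c := c) pr_detect sensors_indep
  idx_uniform idx_indep.
rewrite eB1 eB2 !pr_model // !pmulr_rgt0 ?invr_gt0 ?ltr0n // in B1_gt0 B2_gt0.
rewrite eB1 eB2 !cond_model //.
rewrite !card_imset // !cardsT !card_ord !card_ord_ltn in B1_gt0 B2_gt0 *.
rewrite !(sumr_in_if _ _ _ (fun x => likelihood x _ _)).
rewrite !(sumr_two_valued _ _ _ (fun x => likelihood x _ _)) in B1_gt0 B2_gt0 *.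
have b_le_a := false_alarm_le_detection T_lt_N eps_le.
apply: posterior_miss_le_hit => //; first by rewrite mulr_ge0 // divr_ge0.
by rewrite lerBlDr lerDl.
Qed.
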